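(* Let $V, W$ be real Banach spaces and let $T$ be a bijective bounded linear operator on $V$ with $T^k = I$ for some integer $k \ge 1$. Let $f: [0,\infty) \times V \to V$ satisfy, for some $\Delta t > 0$, $$f(t, Tu) = T f(t + \Delta t, u) \quad \text{for all } u \in V,\ t \ge 0.$$ Suppose there is $\Theta \in GL(V,W)$ and $\lambda < 0$ with $M^\Theta(f_t) \le \lambda$ for all $t \ge 0$. Then for every solution $u$ of $\dot u = f(t,u)$ there is a $k\Delta t$-periodic function $p: [0,\infty) \to V$ with $\|u(t) - p(t)\| \to 0$ as $t \to \infty$; namely $p(t) = \lim_{n \to \infty} u(t + nk\Delta t)$, and this limit exists for every $t \ge 0$.
   Context: For a real Banach space $X$, the right semi-inner product is $(a,b)_+ := \|a\| \lim_{h \to 0^+} \frac{\|a + hb\| - \|a\|}{h}$. For $\Theta \in GL(V,W)$ (a bijective bounded linear operator) and $g: V \to V$, $M^\Theta(g) := \sup_{u \ne v \in V} \frac{(\Theta(u-v), \Theta(g(u) - g(v)))_+}{\|\Theta(u-v)\|_W^2}$. We write $f_t = f(t,\cdot)$. Solutions are continuously differentiable curves $[0,\infty) \to V$ satisfying the equation for all $t \ge 0$. *)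

From HB Require Import structures.
From mathcomp Require Import all_boot all_order all_algebra.
From mathcomp Require Import all_classical all_reals all_analysis.
Set Implicit Arguments. Unset Strict Implicit. Unset Printing Implicit Defensive.
Import Order.TTheory GRing.Theory Num.Theory.
Import numFieldNormedType.Exports.
Local Open Scope classical_set_scope.
Local Open Scope ring_scope.

Definition rsip {R : realType} {W : normedModType R} (a b : W) : R :=
  `|a| * lim ((fun h : R => (`|a + h *: b| - `|a|) / h) @ 0^'+).

Definition MTheta {R : realType} {V W : normedModType R}
  (Theta : V -> W) (g : V -> V) : \bar R :=
  ereal_sup [set r : \bar R | exists u v : V, u <> v /\
     r = (rsip (Theta (u - v)) (Theta (g u - g v)) / `|Theta (u - v)| ^+ 2)%:E].

Definition isGL {R : realType} {V W : normedModType R} (Theta : {linear V -> W}) : Prop :=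
  continuous Theta /\ bijective Theta.

(* u is a solution of u' = f(t,u) on [0,oo): continuously differentiable on
   [0,oo) (one-sided derivative at 0) with u'(t) = f t (u t) for all t >= 0. *)
Definition is_solution {R : realType} {V : normedModType R}
  (f : R -> V -> V) (u : R -> V) : Prop :=
  (forall t : R, 0 < t -> is_derive t 1 u (f t (u t))) /\
  ((fun h : R => h^-1 *: (u h - u 0)) @ 0^'+ --> f 0 (u 0)) /\
  {within `[0, +oo[, continuous (fun t => f t (u t))}.

(* Since T^k = I, the equivariance f(t, Tu) = T f(t + dt, u) makes f periodic
   in time with period K = k dt, so w(t) := u(t + K) solves the same equation.
   The bound M^Theta(f_t) <= lambda says that |Theta(u - w)| has right Dini
   derivative at most lambda |Theta(u - w)|; a continuity induction then gives
   |Theta(u(t) - w(t))| <= C e^(mu t) for every mu > lambda and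
   C > |Theta(u(0) - w(0))|.  The bounded inverse theorem (derived from Baire's
   theorem) transfers this to |u(t + K) - u(t)|, so for mu = lambda / 2 < 0 the
   sequence u(t + nK) has geometrically decaying increments.  Its limit p(t) is
   K-periodic and |u(t) - p(t)| = O(e^(mu t)). *)

From HB Require Import structures.
From mathcomp Require Import all_boot all_order all_algebra.
From mathcomp Require Import all_classical all_reals all_analysis.
From mathcomp Require Import ring lra.
Import Order.TTheory GRing.Theory Num.Theory.
Import numFieldNormedType.Exports.
Local Open Scope classical_set_scope.
Local Open Scope ring_scope.

Section geometric_increments.
Context {R : realType}.

Lemma geometric_increments_dist {V : normedModType R} (x : nat -> V) (B q : R) :
  0 <= q -> q < 1 -> (forall n, `|x n.+1 - x n| <= B * q ^+ n) ->
  forall n m, `|x n - x (n + m)%N| <= B * q ^+ n / (1 - q).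
Proof.
move=> q0 q1 dx n m.
have q1_gt0 : 0 < 1 - q by rewrite subr_gt0.
have B0 : 0 <= B by have := dx 0%N; rewrite expr0 mulr1; exact: le_trans.
suff : `|x n - x (n + m)%N| <= B * q ^+ n * (1 - q ^+ m) / (1 - q).
  move/le_trans; apply; rewrite ler_pM2r ?invr_gt0 //.
  by rewrite ler_piMr ?mulr_ge0 ?exprn_ge0 // lerBlDr lerDl exprn_ge0.
elim: m => [|m IHm]; first by rewrite addn0 subrr normr0 expr0 subrr mulr0 mul0r.
rewrite addnS; apply: le_trans (ler_distD (x (n + m)%N) _ _) _.
apply: le_trans (lerD IHm _) _; first by rewrite distrC; exact: dx.
rewrite [leLHS](_ : _ = B * q ^+ n * (1 - q ^+ m.+1) / (1 - q)) //.
rewrite exprD exprS; field; exact: lt0r_neq0.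
Qed.

Context {V : completeNormedModType R}.
Variables (x : nat -> V) (B q : R).
Hypotheses (q0 : 0 <= q) (q1 : q < 1) (dx : forall n, `|x n.+1 - x n| <= B * q ^+ n).

Lemma cvgn_geometric_increments : cvgn x.
Proof.
apply/cauchy_cvgP/cauchy_exP => e e0.
have tail0 : (fun n => B * q ^+ n / (1 - q)) @ \oo --> 0.
  rewrite (_ : (fun n => _) = geometric (B / (1 - q)) q); last first.
    by apply: funext => n; rewrite /geometric /= mulrAC.
  by apply: cvg_geometric; rewrite ger0_norm.
have [N _ tailN] := (cvgrPdist_lt _ _).1 tail0 e e0.
exists (x N), N => // m /= Nm; rewrite -ball_normE /ball_ /= -(subnKC Nm).
apply: le_lt_trans (geometric_increments_dist _ _ _ q0 q1 dx N (m - N)) _.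
by apply: le_lt_trans _ (tailN N (leqnn N)); rewrite sub0r normrN ler_norm.
Qed.

Lemma geometric_increments_dist_lim : `|x 0%N - limn x| <= B / (1 - q).
Proof.
have : (fun m => `|x 0%N - x m|) @ \oo --> `|x 0%N - limn x|.
  apply: cvg_norm; apply: cvgB; [exact: cvg_cst | exact: cvgn_geometric_increments].
move/cvgr_to_le; apply; apply: nearW => m.
by have := geometric_increments_dist _ _ _ q0 q1 dx 0 m; rewrite expr0 mulr1.
Qed.

End geometric_increments.

Section bounded_inverse.
Context {R : realType} {V W : completeNormedModType R} (Th : {linear V -> W}).
Hypotheses (cTh : continuous Th) (bTh : bijective Th).

Let closure_image_ball (n : nat) := closure (Th @` [set x | `|x| <= n%:R]).

Lemma closure_image_ball_has_ball :
  exists n y0 r, 0 < r /\ ball y0 r `<=` closure_image_ball n.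
Proof.
(* The closed sets [closure_image_ball n] cover [W], so by Baire one of them
   has nonempty interior. *)
have [n nD] : exists n, ~ dense (~` closure_image_ball n).
  apply: contrapT => /forallNP allD.
  have dI : dense (\bigcap_n ~` closure_image_ball n).
    apply: Baire => n; split; last exact: contrapT.
    exact/closed_openC/closed_closure.
  have [y [_ /(_ _ I)]] := dI setT (ex_intro _ 0 I) openT.
  case: bTh => g _ gK.
  apply; apply: subset_closure; exists (g y); last exact: gK.
  exact/ltW/truncnS_gt.
have [U [[y0 [oU Uy0]] UD]] := denseNE nD.
have /nbhs_ballP [r /= r0 rU] : nbhs y0 U by exact: open_nbhs_nbhs.
exists n, y0, r; split => // y /rU Uy; apply: contrapT => Dy.
by have : (U `&` ~` closure_image_ball n) y by []; rewrite UD.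
Qed.

Lemma closure_image_ball_approx n y e : closure_image_ball n y -> 0 < e ->
  exists x, `|x| <= n%:R /\ `|Th x - y| < e.
Proof.
move=> Dy e0; have [_ [[x xn <-] yx]] := Dy _ (nbhsx_ballx y _ e0).
by exists x; split => //; rewrite distrC; move: yx; rewrite -ball_normE.
Qed.

Lemma approximate_preimage :
  exists c, 0 < c /\ forall y, exists x, `|x| <= c * `|y| /\ `|Th x - y| <= `|y| / 2.
Proof.
have [n [y0 [r [r0 rD]]]] := closure_image_ball_has_ball.
(* approximate preimages of [y0 + w] and of [y0] differ by one of [w] *)
have small w : `|w| < r -> exists x, `|x| <= 2 * n%:R /\ `|Th x - w| < r / 4.
  move=> wr; have r8 : 0 < r / 8 by rewrite divr_gt0.
  have [x1 [x1n x1y]] : exists x, `|x| <= n%:R /\ `|Th x - (y0 + w)| < r / 8.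
    apply: (closure_image_ball_approx _ _ _ _ r8); apply: rD.
    by rewrite -ball_normE /ball_ /= opprD addrA subrr sub0r normrN.
  have [x2 [x2n x2y]] := closure_image_ball_approx _ _ _ (rD _ (ballxx y0 r0)) r8.
  exists (x1 - x2); split; first by apply: le_trans (ler_normB _ _) _; lra.
  rewrite linearB /= (_ : _ - w = (Th x1 - (y0 + w)) - (Th x2 - y0)); last first.
    by rewrite opprB opprD !addrA [Th x1 - y0 - w]addrAC subrK addrAC.
  by apply: le_lt_trans (ler_normB _ _) _; lra.
exists (4 * n.+1%:R / r); split; first by rewrite divr_gt0 // mulr_gt0.
move=> y; have [->|y0'] := eqVneq y 0.
  by exists 0; rewrite linear0 subrr !normr0 mulr0 mul0r.
have ny : 0 < `|y| by rewrite normr_gt0.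
pose s := r / (2 * `|y|).
have s0 : 0 < s by rewrite divr_gt0 // mulr_gt0.
have [x [xn xy]] : exists x, `|x| <= 2 * n%:R /\ `|Th x - s *: y| < r / 4.
  apply: small; rewrite normrZ gtr0_norm // /s.
  rewrite (_ : r / (2 * `|y|) * `|y| = r / 2); first lra.
  by field; rewrite gt_eqF.
exists (s^-1 *: x); split.
  rewrite normrZ gtr0_norm ?invr_gt0 // /s invf_div.
  apply: le_trans (ler_wpM2l _ xn) _; first by rewrite divr_ge0 ?mulr_ge0 ?ltW.
  rewrite (_ : 2 * `|y| / r * (2 * n%:R) = `|y| / r * (4 * n%:R)); last first.
    by field; rewrite gt_eqF.
  rewrite (_ : 4 * n.+1%:R / r * `|y| = `|y| / r * (4 * n.+1%:R)); last first.
    by field; rewrite gt_eqF.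
  by rewrite ler_wpM2l ?divr_ge0 ?ltW // -natr1; lra.
rewrite (_ : _ - y = s^-1 *: (Th x - s *: y)); last first.
  by rewrite linearZ /= scalerBr scalerA mulVf ?gt_eqF // scale1r.
rewrite normrZ gtr0_norm ?invr_gt0 // /s invf_div.
rewrite (_ : `|y| / 2 = 2 * `|y| / r * (r / 4)); last by field; rewrite gt_eqF.
by rewrite ler_wpM2l ?divr_ge0 ?mulr_ge0 ?ltW.
Qed.

Lemma bounded_inverse : exists M, 0 < M /\ forall x, `|x| <= M * `|Th x|.
Proof.
have [c [c0 /choice [g g_half]]] := approximate_preimage.
exists (2 * c); split; first by rewrite mulr_gt0.
move=> x; set y := Th x.
(* Correcting the residual by an approximate preimage halves it. *)
pose fix S n := if n is m.+1 then S m + g (y - Th (S m)) else 0.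
have res n : `|y - Th (S n)| <= `|y| * (1 / 2) ^+ n.
  elim: n => [|n IHn]; first by rewrite /= linear0 subr0 expr0 mulr1.
  rewrite /= linearD opprD addrA -opprB normrN.
  apply: le_trans (proj2 (g_half _)) _; rewrite exprSr mulrA; lra.
have dS n : `|S n.+1 - S n| <= c * `|y| * (1 / 2) ^+ n.
  rewrite /= addrC addKr; apply: le_trans (proj1 (g_half _)) _.
  by rewrite -mulrA ler_pM2l.
have q0 : (0 : R) <= 1 / 2 by [].
have q1 : (1 / 2 : R) < 1 by lra.
have ThS : (Th \o S) n @[n --> \oo] --> y.
  apply/cvgrPdist_le => e e0.
  have /cvgrPdist_lt/(_ e e0) := @cvg_geometric R `|y| (1 / 2) ltac:(rewrite ger0_norm //).
  apply: filterS => n /=; rewrite sub0r normrN ger0_norm ?mulr_ge0 ?exprn_ge0 //.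
  by move=> /ltW; apply: le_trans.
have ThlimS : (Th \o S) n @[n --> \oo] --> Th (limn S).
  exact: continuous_cvg _ (cTh _) (cvgn_geometric_increments _ _ _ q0 q1 dS).
have limS : limn S = x by apply: (bij_inj bTh); exact: cvg_unique _ ThlimS ThS.
have := geometric_increments_dist_lim _ _ _ q0 q1 dS.
rewrite limS /= sub0r normrN (_ : c * `|y| / (1 - 1 / 2) = 2 * c * `|y|) //.
by field.
Qed.

End bounded_inverse.

Section right_derivative.
Context {R : realType} {V : normedModType R}.

Definition is_right_derive (u : R -> V) (s : R) (l : V) : Prop :=
  (fun h => h^-1 *: (u (s + h) - u s)) @ 0^'+ --> l.

Lemma is_derive_right (u : R -> V) (s : R) (l : V) :
  is_derive s 1 u l -> is_right_derive u s l.
Proof.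
case=> du <-; apply: cvg_dnbhs_at_right; apply: cvg_trans du.
apply: near_eq_cvg; near=> h; rewrite /= /shift /=.
have -> : h%:A = h :> R by exact: mulr1.
by congr (_ *: (u _ - _)); exact: addrC.
Unshelve. all: end_near.
Qed.

Lemma is_right_derive_cvg (u : R -> V) (s : R) (l : V) :
  is_right_derive u s l -> u (s + h) @[h --> 0^'+] --> u s.
Proof.
move=> du; have h0 : h @[h --> 0^'+] --> (0 : R) by exact/cvg_at_right_filter/cvg_id.
have : u s + h *: (h^-1 *: (u (s + h) - u s)) @[h --> 0^'+] --> u s + 0 *: l.
  by apply: cvgD; [exact: cvg_cst | exact: cvgZ].
rewrite scale0r addr0; apply: cvg_trans; apply: near_eq_cvg; near=> h.
rewrite scalerA mulfV; first by rewrite scale1r addrC subrK.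
by apply: lt0r_neq0; near: h; exact: nbhs_right_gt.
Unshelve. all: end_near.
Qed.

Lemma is_right_derive_shift (u : R -> V) (K s : R) (l : V) :
  is_right_derive u (s + K) l -> is_right_derive (fun t => u (t + K)) s l.
Proof. by rewrite /is_right_derive; under eq_fun do rewrite addrAC. Qed.

End right_derivative.

Section solution.
Context {R : realType} {V : normedModType R} {f : R -> V -> V} {u : R -> V}.
Hypothesis sol_u : is_solution f u.

Lemma solution_right_derive (s : R) : 0 <= s -> is_right_derive u s (f s (u s)).
Proof.
rewrite le_eqVlt => /predU1P [<-|s0]; last exact/is_derive_right/(sol_u.1 s s0).
by rewrite /is_right_derive; under eq_fun do rewrite add0r; exact: sol_u.2.1.
Qed.

Lemma solution_continuous (s : R) : 0 < s -> {for s, continuous u}.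
Proof.
move=> s0; apply: differentiable_continuous; apply/derivable1_diffP.
by case: (sol_u.1 s s0).
Qed.

Lemma solution_shift_right_derive (K s : R) : 0 <= K -> 0 <= s ->
  is_right_derive (fun t => u (t + K)) s (f (s + K) (u (s + K))).
Proof. by move=> K0 s0; apply/is_right_derive_shift/solution_right_derive/addr_ge0. Qed.

Lemma solution_shift_continuous (K s : R) : 0 <= K -> 0 < s ->
  {for s, continuous (fun t => u (t + K))}.
Proof.
move=> K0 s0; apply: (@continuous_comp _ _ _ (fun t => t + K) u).
  by apply: cvgD; [exact: cvg_id | exact: cvg_cst].
exact/solution_continuous/ltr_wpDr.
Qed.

End solution.

Section norm_slope.
Context {R : realType} {W : normedModType R}.

Definition norm_slope (a b : W) (h : R) : R := (`|a + h *: b| - `|a|) / h.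

Lemma norm_slope_nondecreasing (a b : W) (h1 h2 : R) :
  0 < h1 -> h1 <= h2 -> norm_slope a b h1 <= norm_slope a b h2.
Proof.
move=> h10 h12; have h20 : 0 < h2 by apply: lt_le_trans h12.
pose t := h1 / h2.
have t0 : 0 <= t by rewrite divr_ge0 ?ltW.
have t1 : 0 <= 1 - t by rewrite subr_ge0 ler_pdivrMr // mul1r.
have convex : `|a + h1 *: b| <= (1 - t) * `|a| + t * `|a + h2 *: b|.
  have -> : a + h1 *: b = (1 - t) *: a + t *: (a + h2 *: b).
    by rewrite scalerBl scale1r scalerDr scalerA divfK ?gt_eqF // addrA subrK.
  apply: le_trans (ler_normD _ _) _.
  by rewrite normrZ (ger0_norm t1) normrZ (ger0_norm t0).
rewrite /norm_slope ler_pdivrMr // mulrAC -mulrA -/t; nra.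
Qed.

Lemma norm_slope_ge (a b : W) (h : R) : 0 < h -> - `|b| <= norm_slope a b h.
Proof.
move=> h0; rewrite /norm_slope ler_pdivlMr //.
have : `|a| <= `|a + h *: b| + `|h *: b| by rewrite -[a in `|a|](addrK (h *: b)) ler_normB.
rewrite normrZ gtr0_norm //; lra.
Qed.

Lemma norm_slope_cvg (a b : W) : cvg (norm_slope a b @ 0^'+).
Proof.
have mono : {in Interval (BRight 0) (BInfty _ false) &, nondecreasing_fun (norm_slope a b)}.
  by move=> h1 h2; rewrite !in_itv /= !andbT => h10 _; exact: norm_slope_nondecreasing.
have lb : has_lbound (norm_slope a b @` [set` Interval (BRight 0) (BInfty _ false)]).
  exists (- `|b|) => _ [h + <-]; rewrite /= in_itv /= andbT.
  exact: norm_slope_ge.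
exact: cvgP (nondecreasing_at_right_cvgr _ mono lb).
Qed.

Lemma rsipE (a b : W) : rsip a b = `|a| * lim (norm_slope a b @ 0^'+).
Proof. by []. Qed.

End norm_slope.

Lemma lim_norm_slope_le_MTheta {R : realType} {V W : normedModType R}
    (Th : {linear V -> W}) (g : V -> V) (lambda : R) (x y : V) :
  (MTheta Th g <= lambda%:E)%E -> Th (x - y) != 0 ->
  lim (norm_slope (Th (x - y)) (Th (g x - g y)) @ 0^'+) <= lambda * `|Th (x - y)|.
Proof.
move=> gl a0; have na : 0 < `|Th (x - y)| by rewrite normr_gt0.
have xy : x <> y by move=> xy; move: a0; rewrite xy subrr linear0 eqxx.
have : ((rsip (Th (x - y)) (Th (g x - g y)) / `|Th (x - y)| ^+ 2)%:E <= lambda%:E)%E.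
  by apply: le_trans gl; apply: ereal_sup_ubound; exists x, y.
rewrite lee_fin rsipE; set L := lim _.
rewrite (_ : _ * L / _ = L / `|Th (x - y)|) ?ler_pdivrMr //.
by field; rewrite gt_eqF.
Qed.

Lemma norm_diff_right_step {R : realType} {V W : normedModType R}
    {Th : {linear V -> W}} {g : V -> V} {lambda mu : R} {u w : R -> V} {s : R} :
  continuous Th -> (MTheta Th g <= lambda%:E)%E -> lambda < mu ->
  Th (u s - w s) != 0 ->
  is_right_derive u s (g (u s)) -> is_right_derive w s (g (w s)) ->
  \forall h \near 0^'+,
    `|Th (u (s + h) - w (s + h))| <= (1 + mu * h) * `|Th (u s - w s)|.
Proof.
(* The slope of the norm at [a] in direction [b] tends to at most [lambda |a|],
   and the increment of [u - w] over [h] is [h b + o(h)]. *)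
move=> cTh gl lmu a0 du dw.
set a := Th (u s - w s); set b := Th (g (u s) - g (w s)).
have na : 0 < `|a| by rewrite normr_gt0.
pose err h := h^-1 *: ((u (s + h) - w (s + h)) - (u s - w s)) - (g (u s) - g (w s)).
have slope_lt : \forall h \near 0^'+, norm_slope a b h < (lambda + mu) / 2 * `|a|.
  apply: cvgr_lt (norm_slope_cvg a b) _ _.
  apply: le_lt_trans (lim_norm_slope_le_MTheta _ _ _ _ _ gl a0) _; nra.
have err_small : \forall h \near 0^'+, `|Th (err h)| < (mu - lambda) / 2 * `|a|.
  apply: cvgr0_norm_lt; last by rewrite mulr_gt0 // divr_gt0 // subr_gt0.
  rewrite -(linear0 Th); apply: continuous_cvg; first exact: cTh.
  rewrite -(subrr (g (u s) - g (w s))); apply: cvgB; last exact: cvg_cst.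
  apply: cvg_trans (cvgB du dw); apply: near_eq_cvg; near=> h.
  by rewrite !fctE -scalerBr !opprD !opprK addrACA.
near=> h.
have h0 : 0 < h by near: h; exact: nbhs_right_gt.
have -> : u (s + h) - w (s + h) = (u s - w s) + h *: ((g (u s) - g (w s)) + err h).
  by rewrite /err subrKC scalerA mulfV ?gt_eqF // scale1r subrKC.
rewrite (linearD Th (u s - w s)) linearZ /= (linearD Th (g (u s) - g (w s))).
rewrite -/a -/b scalerDr addrA.
apply: le_trans (ler_normD _ _) _; rewrite normrZ gtr0_norm //.
have : `|a + h *: b| = `|a| + h * norm_slope a b h.
  by rewrite /norm_slope mulrC divfK ?gt_eqF //; lra.
have : h * norm_slope a b h <= h * ((lambda + mu) / 2 * `|a|).
  by rewrite ler_pM2l //; apply: ltW; near: h.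
have : h * `|Th (err h)| <= h * ((mu - lambda) / 2 * `|a|).
  by rewrite ler_pM2l //; apply: ltW; near: h.
nra.
Unshelve. all: end_near.
Qed.

Lemma nonpos_by_right_continuation {R : realType} (psi : R -> R) :
  psi 0 <= 0 -> (forall s, 0 < s -> {for s, continuous psi}) ->
  (forall s, 0 <= s -> psi s <= 0 -> \forall h \near 0^'+, psi (s + h) <= 0) ->
  forall t, 0 <= t -> psi t <= 0.
Proof.
move=> psi0 cpsi step c c0; rewrite leNgt; apply/negP => pc.
pose S := [set t | 0 <= t <= c /\ psi t <= 0].
have S0 : S 0 by rewrite /S /= lexx c0.
have hS : has_sup S by split; [exists 0 | exists c => t [/andP []]].
have s0 : 0 <= sup S by exact: sup_upper_bound.
have sc : sup S <= c by apply: ge_sup; [exists 0 | move=> t [/andP []]].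
have ps : psi (sup S) <= 0.
  move: (s0); rewrite le_eqVlt => /predU1P [<- //|s_gt0].
  rewrite leNgt; apply/negP => pos.
  have /(_ _)/nbhs_ballP [d /= d0 dpos] := cvgr_gt _ (cpsi _ s_gt0) _ pos.
  have [t St st] := sup_adherent d0 hS.
  have ts : t <= sup S by exact: sup_upper_bound.
  have : 0 < psi t by apply: dpos; rewrite -ball_normE /= ger0_norm ?subr_ge0; lra.
  by case: St => _; lra.
have [h [h0 [hc psh]]] : exists h, 0 < h /\ h < c - sup S /\ psi (sup S + h) <= 0.
  apply: (@filter_ex _ (0 : R)^'+); near=> h; split; first by near: h; exact: nbhs_right_gt.
  split; last by near: h; exact: step.
  near: h; apply: nbhs_right_lt; rewrite subr_gt0 lt_neqAle sc andbT.
  by apply: contraTneq ps => ->; rewrite -ltNge.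
have : sup S + h <= sup S by apply: sup_upper_bound => //; split => //; apply/andP; lra.
lra.
Unshelve. all: end_near.
Qed.

Section exponential_contraction.
Context {R : realType} {V W : normedModType R} (Th : {linear V -> W}) (f : R -> V -> V).
Variables (lambda mu C : R) (u w : R -> V).
Hypotheses (cTh : continuous Th) (lmu : lambda < mu)
  (fl : forall t, 0 <= t -> (MTheta Th (f t) <= lambda%:E)%E)
  (du : forall s, 0 <= s -> is_right_derive u s (f s (u s)))
  (dw : forall s, 0 <= s -> is_right_derive w s (f s (w s)))
  (cu : forall s, 0 < s -> {for s, continuous u})
  (cw : forall s, 0 < s -> {for s, continuous w})
  (uw0 : `|Th (u 0 - w 0)| < C).

Let psi t := `|Th (u t - w t)| - C * expR (mu * t).

Let psi_cvg {T} (F : set_system T) {FF : Filter F} (r : T -> R) (s : R) :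
  r x @[x --> F] --> s -> u (r x) @[x --> F] --> u s -> w (r x) @[x --> F] --> w s ->
  psi (r x) @[x --> F] --> psi s.
Proof.
move=> rs us ws; apply: cvgB.
  by apply: cvg_norm; apply: (continuous_cvg _ (cTh _)); exact: cvgB.
apply: cvgM; first exact: cvg_cst.
apply: (@continuous_cvg _ _ _ _ _ (fun x => mu * r x) expR); first exact: continuous_expR.
by apply: cvgM => //; exact: cvg_cst.
Qed.

Let psi_right_cvg (s : R) : 0 <= s -> psi (s + h) @[h --> 0^'+] --> psi s.
Proof.
move=> s0; apply: psi_cvg; last 2 first.
- exact: is_right_derive_cvg (du _ s0).
- exact: is_right_derive_cvg (dw _ s0).
rewrite -[X in _ --> X]addr0; apply: cvgD; first exact: cvg_cst.
exact/cvg_at_right_filter/cvg_id.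
Qed.

Lemma exp_contraction (t : R) : 0 <= t -> `|Th (u t - w t)| <= C * expR (mu * t).
Proof.
move=> t0; rewrite -subr_le0 -/(psi t).
have C0 : 0 < C by apply: le_lt_trans uw0.
apply: nonpos_by_right_continuation t0.
- by rewrite /psi mulr0 expR0 mulr1 subr_le0 ltW.
- by move=> s s0; apply: psi_cvg; [exact: cvg_id | exact: cu | exact: cw].
move=> s s0 ps; have [uws0|uws_neq0] := eqVneq (Th (u s - w s)) 0.
  have psi_neg : psi s < 0 by rewrite /psi uws0 normr0 sub0r oppr_lt0 mulr_gt0 ?expR_gt0.
  near=> h; apply/ltW; near: h; exact: cvgr_lt _ (psi_right_cvg _ s0) _ psi_neg.
(* [1 + mu h <= expR (mu h)] turns the one-step estimate into the exponential bound. *)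
have := norm_diff_right_step cTh (fl _ s0) lmu uws_neq0 (du _ s0) (dw _ s0).
apply: filterS => h step; rewrite /psi subr_le0 mulrDr expRD mulrA.
apply: le_trans step _; rewrite mulrC.
apply: le_trans (ler_wpM2l (normr_ge0 _) (expR_ge1Dx (mu * h))) _.
by rewrite ler_wpM2r ?(ltW (expR_gt0 _)) // -subr_le0.
Unshelve. all: end_near.
Qed.

End exponential_contraction.

Lemma equivariant_time_periodic {R : numDomainType} {V : Type}
    {T : V -> V} {k : nat} {f : R -> V -> V} {dt : R} :
  0 <= dt -> (forall x, iter k T x = x) ->
  (forall t x, 0 <= t -> f t (T x) = T (f (t + dt) x)) ->
  forall s x, 0 <= s -> f (s + k%:R * dt) x = f s x.
Proof.
move=> dt0 Tk fT s x s0.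
have iter_f j t : 0 <= t -> f t (iter j T x) = iter j T (f (t + j%:R * dt) x).
  elim: j t => [|j IHj] t t0; first by rewrite mul0r addr0.
  rewrite iterS fT // IHj ?addr_ge0 // -iterS.
  by congr (iter _ T (f _ x)); rewrite -natr1; ring.
by rewrite -{2}(Tk x) iter_f // Tk.
Qed.

Lemma asymptotically_periodic {R : realType} {V : completeNormedModType R}
    (u : R -> V) (K A mu : R) :
  0 < K -> mu < 0 -> (forall t, 0 <= t -> `|u (t + K) - u t| <= A * expR (mu * t)) ->
  exists p : R -> V,
    (forall t, 0 <= t -> p (t + K) = p t) /\
    (forall t, 0 <= t -> (fun n : nat => u (t + n%:R * K)) @ \oo --> p t) /\
    ((fun t => `|u t - p t|) @ +oo --> (0 : R)).
Proof.
move=> K0 mu0 du.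
pose q := expR (mu * K).
have q0 : 0 <= q by exact/ltW/expR_gt0.
have q1 : q < 1 by rewrite expR_lt1 nmulr_rlt0.
have dx t : 0 <= t -> forall n,
    `|u (t + n.+1%:R * K) - u (t + n%:R * K)| <= A * expR (mu * t) * q ^+ n.
  move=> t0 n; rewrite -natr1 mulrDl mul1r addrA.
  apply: le_trans (du _ _) _; first by rewrite addr_ge0 // mulr_ge0 // ltW.
  by rewrite mulrDr expRD (mulrCA mu) expRM_natl mulrA.
pose p t := limn (fun n => u (t + n%:R * K)).
have cvg_p t : 0 <= t -> (fun n => u (t + n%:R * K)) @ \oo --> p t.
  by move=> t0; exact: cvgn_geometric_increments _ _ _ q0 q1 (dx t t0).
have dist_p t : 0 <= t -> `|u t - p t| <= A * expR (mu * t) / (1 - q).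
  move=> t0; have := geometric_increments_dist_lim _ _ _ q0 q1 (dx t t0).
  by rewrite mul0r addr0.
exists p; split; [|split] => //.
  move=> t t0; apply: cvg_lim => //.
  move: (cvg_p t t0); rewrite -cvg_shiftS; apply: cvg_trans.
  by apply: near_eq_cvg; apply: nearW => n /=; congr u; rewrite -natr1; ring.
have expR_mu : expR (mu * t) @[t --> +oo] --> 0.
  have : - mu * t @[t --> +oo] --> +oo.
    by apply: gt0_cvgMry; [rewrite oppr_gt0 | exact: cvg_id].
  move/cvg_comp => /(_ _ _ _ (@cvgr_expR R)).
  by apply: cvg_trans; apply: near_eq_cvg; apply: nearW => t /=; rewrite mulNr opprK.
apply: (@squeeze_cvgr _ _ _ _ (cst 0) (fun t => A / (1 - q) * expR (mu * t))).
- near=> t; rewrite normr_ge0 mulrAC; apply: dist_p.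
  by near: t; apply: nbhs_pinfty_ge; exact: num_real.
- exact: cvg_cst.
- by rewrite -(mulr0 (A / (1 - q))); apply: cvgM => //; exact: cvg_cst.
Unshelve. all: end_near.
Qed.

Theorem mainTheorem12 (R : realType) (V W : completeNormedModType R)
  (T : {linear V -> V}) (k : nat) (f : R -> V -> V) (dt : R)
  (Theta : {linear V -> W}) (lambda : R) :
  continuous T -> bijective T ->
  (0 < k)%N -> (forall x : V, iter k T x = x) ->
  0 < dt ->
  (forall (t : R) (u : V), 0 <= t -> f t (T u) = T (f (t + dt) u)) ->
  isGL Theta -> lambda < 0 ->
  (forall t : R, 0 <= t -> (MTheta Theta (f t) <= lambda%:E)%E) ->
  forall u : R -> V, is_solution f u ->
  exists p : R -> V,
    (forall t : R, 0 <= t -> p (t + k%:R * dt) = p t) /\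
    (forall t : R, 0 <= t ->
       (fun n : nat => u (t + n%:R * (k%:R * dt))) @ \oo --> p t) /\
    ((fun t : R => `|u t - p t|) @ +oo --> (0 : R)).
Proof.
move=> _ _ k0 Tk dt0 fT [cTh bTh] l0 fl u sol.
set K := k%:R * dt; have K0 : 0 < K by rewrite mulr_gt0 // ltr0n.
have fK := equivariant_time_periodic (ltW dt0) Tk fT.
pose w t := u (t + K); pose C := `|Theta (w 0 - u 0)| + 1.
have contract t : 0 <= t -> `|Theta (w t - u t)| <= C * expR (lambda / 2 * t).
  apply: (@exp_contraction _ _ _ Theta f lambda (lambda / 2) C w u cTh) => //.
  - by rewrite ltr_pdivlMr //; lra.
  - by move=> s s0; rewrite -fK //; exact: solution_shift_right_derive sol _ _ (ltW K0) s0.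
  - by move=> s; exact: (solution_right_derive sol s).
  - by move=> s; exact: (solution_shift_continuous sol K s (ltW K0)).
  - by move=> s; exact: (solution_continuous sol s).
  - by rewrite ltrDl.
have [M [M0 invM]] := bounded_inverse _ cTh bTh.
apply: (@asymptotically_periodic _ _ u K (M * C) (lambda / 2) K0); first lra.
move=> t t0; apply: le_trans (invM _) _; rewrite -[M * C * _]mulrA ler_pM2l //.
exact: contract.
Qed.
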